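(* Let $A$ be a finite set, $n\ge3$, let $\rho\subseteq A^n$ be a strongly rich relation preserved by a WNU vector-function $(f_1,\dots,f_n)$, and let $\sigma\subseteq A^m$, $m\ge3$, be a totally reflexive relation preserved by $f_1$. Then $\sigma=A^m$.
   Context: $\rho\subseteq A^n$ is strongly rich if for every $(a_1,\dots,a_n)\in A^n$ and every $j$ there is a unique $b\in A$ with $(a_1,\dots,a_{j-1},b,a_{j+1},\dots,a_n)\in\rho$. $\sigma\subseteq A^m$ is totally reflexive if it contains every $(a_1,\dots,a_m)$ with $|\{a_1,\dots,a_m\}|<m$. A WNU is a $k$-ary ($k\ge2$) operation $f$ with $f(x,\dots,x)=x$ and $f(y,x,\dots,x)=f(x,y,x,\dots,x)=\dots=f(x,\dots,x,y)$; a WNU vector-function is a tuple $(f_1,\dots,f_n)$ of $k$-ary WNUs, preserving $\rho$ if applying $f_i$ to the $i$-th coordinates of any $k$ tuples of $\rho$ yields a tuple in $\rho$; a single operation preserves $\sigma$ if applying it coordinatewise to tuples of $\sigma$ yields a tuple of $\sigma$. *)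

From mathcomp Require Import all_boot.
Set Implicit Arguments. Unset Strict Implicit. Unset Printing Implicit Defensive.

Definition strongly_rich (A : finType) (n : nat) (rho : ('I_n -> A) -> Prop) : Prop :=
  forall (a : 'I_n -> A) (j : 'I_n),
    exists! b : A, rho (fun i => if i == j then b else a i).

Definition totally_reflexive (A : finType) (m : nat) (sigma : ('I_m -> A) -> Prop) : Prop :=
  forall a : 'I_m -> A, #|[set a i | i : 'I_m]| < m -> sigma a.

(* f is a k-ary weak near-unanimity operation (k >= 2 is required separately). *)
Definition is_WNU (A : finType) (k : nat) (f : ('I_k -> A) -> A) : Prop :=
  (forall x : A, f (fun _ => x) = x) /\
  (forall (x y : A) (i j : 'I_k),
      f (fun l => if l == i then y else x) = f (fun l => if l == j then y else x)).

Definition vec_preserves (A : finType) (n k : nat) (fs : 'I_n -> ('I_k -> A) -> A)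
    (rho : ('I_n -> A) -> Prop) : Prop :=
  forall t : 'I_k -> 'I_n -> A, (forall l, rho (t l)) ->
    rho (fun i => fs i (fun l => t l i)).

Definition op_preserves (A : finType) (m k : nat) (f : ('I_k -> A) -> A)
    (sigma : ('I_m -> A) -> Prop) : Prop :=
  forall t : 'I_k -> 'I_m -> A, (forall l, sigma (t l)) ->
    sigma (fun i => f (fun l => t l i)).

(* Freeze all coordinates of rho except the first three at a constant x0: strong
   richness turns the resulting ternary relation into a Latin cube (any two entries
   determine the third), preserved by (f_1, f_2, f_3).  Moving from (y, ..., y) to
   (x0, ..., x0) one argument at a time, the Latin-cube property transports the
   value f_1(x0, ..., y, ..., x0) back to y, so this unary polynomial is injective,
   hence a permutation of the finite set A.  With these permutations every tuple
   of A^m is f_1 applied to k tuples that each repeat an entry, and these lie in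
   sigma by total reflexivity. *)

From mathcomp Require Import all_boot.
From Stdlib Require Import FunctionalExtensionality.
Set Implicit Arguments. Unset Strict Implicit. Unset Printing Implicit Defensive.

Definition upd (T : Type) n (t : 'I_n -> T) (j : 'I_n) (b : T) : 'I_n -> T :=
  fun i => if i == j then b else t i.

Lemma upd_upd (T : Type) n (t : 'I_n -> T) j b b' : upd (upd t j b) j b' = upd t j b'.
Proof. by apply: functional_extensionality => i; rewrite /upd; case: eqP. Qed.

Lemma upd_comm (T : Type) n (t : 'I_n -> T) j j' b b' :
  j != j' -> upd (upd t j b) j' b' = upd (upd t j' b') j b.
Proof.
move=> neq; apply: functional_extensionality => i; rewrite /upd.
by case: eqP => [->|//]; rewrite eq_sym (negbTE neq).
Qed.

Definition vapply (T : Type) n k (fs : 'I_n -> ('I_k -> T) -> T) (t : 'I_k -> 'I_n -> T) :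
  'I_n -> T := fun i => fs i (fun l => t l i).

Lemma vapply_upd (T : Type) n k (fs : 'I_n -> ('I_k -> T) -> T) t j (b : 'I_k -> T) :
  vapply fs (fun l => upd (t l) j (b l)) = upd (vapply fs t) j (fs j b).
Proof.
by apply: functional_extensionality => i; rewrite /vapply /upd; case: eqP => [->|].
Qed.

Lemma vapply_const (T : Type) n k (fs : 'I_n -> ('I_k -> T) -> T) (x : T) :
  (forall i, fs i (fun _ => x) = x) -> vapply fs (fun _ _ => x) = fun _ => x.
Proof. by move=> idem; apply: functional_extensionality => i; apply: idem. Qed.

Lemma strongly_rich_upd_exists (A : finType) n (rho : ('I_n -> A) -> Prop) t j :
  strongly_rich rho -> exists b, rho (upd t j b).
Proof. by move=> rich; have [b [rb _]] := rich t j; exists b. Qed.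

Lemma strongly_rich_upd_unique (A : finType) n (rho : ('I_n -> A) -> Prop) t j b b' :
  strongly_rich rho -> rho (upd t j b) -> rho (upd t j b') -> b = b'.
Proof. by move=> rich rb rb'; have [c [_ uc]] := rich t j; rewrite -(uc b rb) (uc b' rb'). Qed.

Section Slice.

Variables (A : finType) (n k : nat) (rho : ('I_n -> A) -> Prop).
Variables (fs : 'I_n -> ('I_k -> A) -> A) (i0 i1 i2 : 'I_n) (x0 : A).
Hypotheses (d01 : i0 != i1) (d02 : i0 != i2) (d12 : i1 != i2).
Hypothesis rich : strongly_rich rho.

Definition slice_tuple (z a b : A) : 'I_n -> A :=
  upd (upd (upd (fun _ => x0) i2 b) i1 a) i0 z.

Definition slice3 (z a b : A) : Prop := rho (slice_tuple z a b).

Lemma upd_slice_tuple0 z a b z' : upd (slice_tuple z a b) i0 z' = slice_tuple z' a b.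
Proof. exact: upd_upd. Qed.

Lemma upd_slice_tuple1 z a b a' : upd (slice_tuple z a b) i1 a' = slice_tuple z a' b.
Proof. by rewrite /slice_tuple upd_comm // upd_upd. Qed.

Lemma upd_slice_tuple2 z a b b' : upd (slice_tuple z a b) i2 b' = slice_tuple z a b'.
Proof. by rewrite /slice_tuple upd_comm // [upd (upd _ i1 _) i2 _]upd_comm // upd_upd. Qed.

Lemma slice3_exists1 z b : exists a, slice3 z a b.
Proof.
have [a ra] := strongly_rich_upd_exists (slice_tuple z x0 b) i1 rich.
by exists a; rewrite /slice3 -(upd_slice_tuple1 z x0).
Qed.

Lemma slice3_exists2 z a : exists b, slice3 z a b.
Proof.
have [b rb] := strongly_rich_upd_exists (slice_tuple z a x0) i2 rich.
by exists b; rewrite /slice3 -(upd_slice_tuple2 z a x0).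
Qed.

Lemma slice3_unique0 z z' a b : slice3 z a b -> slice3 z' a b -> z = z'.
Proof.
rewrite /slice3 -(upd_slice_tuple0 z a b z) -(upd_slice_tuple0 z a b z').
exact: strongly_rich_upd_unique.
Qed.

Lemma slice3_unique1 z a a' b : slice3 z a b -> slice3 z a' b -> a = a'.
Proof.
rewrite /slice3 -(upd_slice_tuple1 z a b a) -(upd_slice_tuple1 z a b a').
exact: strongly_rich_upd_unique.
Qed.

Lemma slice3_unique2 z a b b' : slice3 z a b -> slice3 z a b' -> b = b'.
Proof.
rewrite /slice3 -(upd_slice_tuple2 z a b b) -(upd_slice_tuple2 z a b b').
exact: strongly_rich_upd_unique.
Qed.

Lemma slice3_preserved :
  (forall i x, fs i (fun _ => x) = x) -> vec_preserves fs rho ->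
  forall Z X Y : 'I_k -> A, (forall l, slice3 (Z l) (X l) (Y l)) ->
  slice3 (fs i0 Z) (fs i1 X) (fs i2 Y).
Proof.
move=> idem pres Z X Y sl; have := pres _ sl; rewrite -/(vapply _ _).
by rewrite !vapply_upd vapply_const.
Qed.

End Slice.

Section LatinCube.

Variables (A : finType) (k : nat) (g0 g1 g2 : ('I_k -> A) -> A).
Variable P : A -> A -> A -> Prop.
Hypothesis g0_WNU : is_WNU g0.
Hypotheses (g1_idem : forall x, g1 (fun _ => x) = x) (g2_idem : forall x, g2 (fun _ => x) = x).
Hypothesis P_preserved : forall Z X Y : 'I_k -> A,
  (forall l, P (Z l) (X l) (Y l)) -> P (g0 Z) (g1 X) (g2 Y).
Hypotheses (P_exists1 : forall z b, exists a, P z a b) (P_exists2 : forall z a, exists b, P z a b).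
Hypotheses (P_unique0 : forall z z' a b, P z a b -> P z' a b -> z = z')
           (P_unique1 : forall z a a' b, P z a b -> P z a' b -> a = a')
           (P_unique2 : forall z a b b', P z a b -> P z a b' -> b = b').
Variables (x0 a0 : A) (l0 : 'I_k).
Hypothesis P_base : P x0 a0 x0.

Definition prefix_tuple (j : nat) (y : A) : 'I_k -> A := fun l => if l < j then x0 else y.

Lemma prefix_tuple_step j y : j < k -> exists p q,
  [/\ P (g0 (upd (fun _ => x0) l0 y)) p x0, P (g0 (prefix_tuple j.+1 y)) a0 q
    & P (g0 (prefix_tuple j y)) p q].
Proof.
move=> ltjk; pose lj := Ordinal ltjk.
have [ay Pay] := P_exists1 y x0; have [b Pb] := P_exists2 y a0.
exists (g1 (upd (fun _ => a0) lj ay)), (g2 (prefix_tuple j.+1 b)); split.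
- rewrite (proj2 g0_WNU x0 y l0 lj) -{2}(g2_idem x0).
  by apply: P_preserved => l; rewrite /upd; case: (l == lj).
- rewrite -{1}(g1_idem a0); apply: P_preserved => l; rewrite /prefix_tuple.
  by case: (l < j.+1).
- apply: P_preserved => l; rewrite /upd /prefix_tuple ltnS.
  have -> : (l == lj) = (nat_of_ord l == j) by [].
  by case: ltngtP.
Qed.

Lemma WNU_unary_injective : injective (fun y => g0 (upd (fun _ => x0) l0 y)).
Proof.
move=> y y' eq_y.
suff eq_prefix : forall d, d <= k -> g0 (prefix_tuple (k - d) y) = g0 (prefix_tuple (k - d) y').
  by have := eq_prefix k (leqnn k); rewrite subnn /prefix_tuple /= !(proj1 g0_WNU).
elim=> [_|d IH ltdk].
  by rewrite subn0 /prefix_tuple; congr g0; apply: functional_extensionality => l; rewrite ltn_ord.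
have ltjk : k - d.+1 < k by rewrite -subSn // subSS leq_subr.
have [p [q [h1 h2 h3]]] := prefix_tuple_step y ltjk.
have [p' [q' [h1' h2' h3']]] := prefix_tuple_step y' ltjk.
rewrite -subSn // subSS in h2 h2'; rewrite eq_y in h1.
have eq_p := P_unique1 h1 h1'.
rewrite (IH (ltnW ltdk)) in h2.
rewrite eq_p (P_unique2 h2 h2') in h3; exact: P_unique0 h3 h3'.
Qed.

End LatinCube.

Lemma totally_reflexive_noninjective (A : finType) m (sigma : ('I_m -> A) -> Prop)
    (a : 'I_m -> A) i i' :
  totally_reflexive sigma -> i != i' -> a i = a i' -> sigma a.
Proof.
move=> refl neq eq_a; apply: refl; rewrite ltn_neqAle.
have := leq_imset_card a 'I_m; rewrite card_ord => -> /=; rewrite andbT.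
apply/negP => /eqP card_a.
have /imset_injP inj : #|[set a x | x in 'I_m]| == #|'I_m| by rewrite card_a card_ord.
by move: neq; rewrite (inj i i' isT isT eq_a) eqxx.
Qed.

Lemma totally_reflexive_full (A : finType) k m (f : ('I_k -> A) -> A)
    (sigma : ('I_m -> A) -> Prop) (l0 l1 : 'I_k) (j0 j1 j2 : 'I_m) :
  l0 != l1 -> j0 != j1 -> j0 != j2 -> j1 != j2 -> is_WNU f ->
  (forall u, injective (fun v => f (upd (fun _ => u) l0 v))) ->
  totally_reflexive sigma -> op_preserves f sigma -> forall a, sigma a.
Proof.
move=> d01 dj01 dj02 dj12 [_ f_sym] inj refl pres a.
have [w_inv _ w_invK] := injF_bij (inj (a j0)).
pose v1 := w_inv (a j1).
have [w1_inv _ w1_invK] := injF_bij (inj v1).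
(* Column j0 is decoded by [w1_inv], the other columns by [w_inv];
   row l1 repeats [v1] at j0 and j1, every other row repeats
   [a j0] at j1 and j2. *)
pose t : 'I_k -> 'I_m -> A := fun l i =>
  if i == j0 then upd (fun _ => v1) l0 (w1_inv (a j0)) l
  else upd (fun _ => a j0) l1 (w_inv (a i)) l.
have -> : a = fun i => f (fun l => t l i).
  apply: functional_extensionality => i; rewrite /t.
  have [->|_] := eqVneq i j0; first by rewrite w1_invK.
  by rewrite (f_sym (a j0) (w_inv (a i)) l1 l0) w_invK.
apply: pres => l; rewrite /t /upd.
have [->|_] := eqVneq l l0.
  apply: (@totally_reflexive_noninjective _ _ _ _ _ _ refl dj12).
  by rewrite eq_sym (negbTE d01) !(eq_sym _ j0) (negbTE dj01) (negbTE dj02).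
have [_|_] := eqVneq l l1.
  apply: (@totally_reflexive_noninjective _ _ _ _ _ _ refl dj01).
  by rewrite eqxx eq_sym (negbTE dj01).
apply: (@totally_reflexive_noninjective _ _ _ _ _ _ refl dj12).
by rewrite !(eq_sym _ j0) (negbTE dj01) (negbTE dj02).
Qed.

Theorem mainTheorem18 (A : finType) (n : nat) (hn : 3 <= n)
    (rho : ('I_n -> A) -> Prop) (k : nat) (hk : 2 <= k)
    (fs : 'I_n -> ('I_k -> A) -> A)
    (m : nat) (hm : 3 <= m) (sigma : ('I_m -> A) -> Prop) :
  strongly_rich rho ->
  (forall i, is_WNU (fs i)) ->
  vec_preserves fs rho ->
  totally_reflexive sigma ->
  op_preserves (fs (Ordinal (leq_trans (isT : 0 < 3) hn))) sigma ->
  forall a : 'I_m -> A, sigma a.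
Proof.
move=> rich WNU pres refl.
set i0 := Ordinal _ => pres0.
pose i1 : 'I_n := Ordinal (leq_trans (isT : 1 < 3) hn).
pose i2 : 'I_n := Ordinal (leq_trans (isT : 2 < 3) hn).
pose l0 : 'I_k := Ordinal (ltnW hk).
have idem i x : fs i (fun _ => x) = x by case: (WNU i).
have inj x0 : injective (fun y => fs i0 (upd (fun _ => x0) l0 y)).
  have [a0 base] : exists a0, slice3 rho i0 i1 i2 x0 x0 a0 x0 by exact: slice3_exists1.
  apply: (WNU_unary_injective (g1 := fs i1) (g2 := fs i2) (P := slice3 rho i0 i1 i2 x0)
    (WNU i0) (idem i1) (idem i2) _ _ _ _ _ _ base).
  - exact: slice3_preserved.
  - exact: slice3_exists1.
  - exact: slice3_exists2.
  - exact: slice3_unique0.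
  - exact: slice3_unique1.
  - exact: slice3_unique2.
apply: (@totally_reflexive_full _ _ _ _ _ l0 (Ordinal hk)
  (Ordinal (leq_trans (isT : 0 < 3) hm)) (Ordinal (leq_trans (isT : 1 < 3) hm))
  (Ordinal (leq_trans (isT : 2 < 3) hm)) _ _ _ _ (WNU i0) inj refl pres0) => //.
Qed.
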